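(* Let $D\subseteq\mathbb{R}$ and let $f,g:D\to\mathbb{R}$ be ordinal decreasing on $D$. Then $f+g$ is ordinal decreasing on $D$.
   Context: For $h:D\to\mathbb{R}$, a strictly decreasing sequence $x_1>x_2>\cdots$ in $D$ is $h$-bad if $h(x_1)>h(x_2)>\cdots$; $h$ is ordinal decreasing if there is no infinite $h$-bad sequence. *)

From Stdlib Require Import Reals.
Open Scope R_scope.

(* A subset D of R is a predicate; a function h : D -> R is modeled by a total
   function h : R -> R, of which only the values on D matter. *)

Definition bad_seq (D : R -> Prop) (h : R -> R) (x : nat -> R) : Prop :=
  (forall n, D (x n)) /\
  (forall n, x (S n) < x n) /\
  (forall n, h (x (S n)) < h (x n)).

Definition ordinal_decreasing (D : R -> Prop) (h : R -> R) : Prop :=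
  ~ exists x : nat -> R, bad_seq D h x.

(* Let x be a (f+g)-bad sequence and call i a tail minimum of f when
   f(x_i) <= f(x_j) for all j > i.  If there are infinitely many tail minima,
   f does not decrease along them, so g must strictly decrease there and they
   index a g-bad subsequence.  Otherwise, past the last tail minimum every
   index has a later one with smaller f-value, and iterating this choice gives
   an f-bad subsequence. *)

From Stdlib Require Import Reals.
From Stdlib Require Import Lra Lia Classical ClassicalEpsilon ChoiceFacts.
Open Scope R_scope.

Definition tail_min (h : R -> R) (x : nat -> R) (i : nat) : Prop :=
  forall j, (i < j)%nat -> h (x i) <= h (x j).

Lemma strict_decr_lt (u : nat -> R) :
  (forall n, u (S n) < u n) -> forall i j, (i < j)%nat -> u j < u i.
Proof.
  intros Hu i j Hij; induction Hij as [|j _ IH].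
  - apply Hu.
  - specialize (Hu j); lra.
Qed.

Lemma bad_seq_of_descent_chain (D : R -> Prop) (h : R -> R) (x : nat -> R)
    (P : nat -> Prop) (i0 : nat) :
  (forall n, D (x n)) -> (forall n, x (S n) < x n) -> P i0 ->
  (forall i, P i -> exists j, (i < j)%nat /\ P j /\ h (x j) < h (x i)) ->
  exists y, bad_seq D h y.
Proof.
  intros HD Hx Hi0 Hstep.
  set (descent := fun a b : {i | P i} =>
         (proj1_sig a < proj1_sig b)%nat /\
         h (x (proj1_sig b)) < h (x (proj1_sig a))).
  assert (Htot : forall a, exists b, descent a b).
  { intros [i Hi]; destruct (Hstep i Hi) as (j & Hij & Hj & Hh).
    now exists (exist _ j Hj). }
  destruct (functional_choice_imp_functional_dependent_choice
              choice _ Htot (exist _ i0 Hi0)) as (u & _ & Hu).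
  exists (fun k => x (proj1_sig (u k))); split; [|split]; intro k.
  - apply HD.
  - apply strict_decr_lt; [exact Hx | apply Hu].
  - apply Hu.
Qed.

Lemma bad_seq_of_unbounded_tail_mins (D : R -> Prop) (f g : R -> R)
    (x : nat -> R) :
  bad_seq D (fun t => f t + g t) x ->
  (forall N, exists i, (N <= i)%nat /\ tail_min f x i) ->
  exists y, bad_seq D g y.
Proof.
  intros (HD & Hx & Hfg) Hmins.
  destruct (Hmins O) as (i0 & _ & Hi0).
  apply (bad_seq_of_descent_chain D g x (tail_min f x) i0); auto.
  intros i Hi; destruct (Hmins (S i)) as (j & Hij & Hj).
  exists j; split; [lia | split; [exact Hj |]].
  assert (Hf : f (x i) <= f (x j)) by (apply Hi; lia).
  assert (Hsum : f (x j) + g (x j) < f (x i) + g (x i))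
    by exact (strict_decr_lt _ Hfg i j ltac:(lia)).
  lra.
Qed.

Lemma bad_seq_of_bounded_tail_mins (D : R -> Prop) (h : R -> R)
    (x : nat -> R) (N : nat) :
  (forall n, D (x n)) -> (forall n, x (S n) < x n) ->
  (forall i, (N <= i)%nat -> ~ tail_min h x i) ->
  exists y, bad_seq D h y.
Proof.
  intros HD Hx Hmins.
  apply (bad_seq_of_descent_chain D h x (fun i => (N <= i)%nat) N); auto.
  intros i Hi.
  destruct (not_all_ex_not _ _ (Hmins i Hi)) as [j Hj].
  destruct (imply_to_and _ _ Hj) as [Hij Hh].
  exists j; split; [exact Hij | split; [lia | now apply Rnot_le_lt]].
Qed.

Theorem lemma4 (D : R -> Prop) (f g : R -> R) :
  ordinal_decreasing D f -> ordinal_decreasing D g ->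
  ordinal_decreasing D (fun x => f x + g x).
Proof.
  intros Hf Hg [x Hbad].
  destruct (classic (forall N, exists i, (N <= i)%nat /\ tail_min f x i))
    as [Hinf | Hfin].
  - exact (Hg (bad_seq_of_unbounded_tail_mins D f g x Hbad Hinf)).
  - destruct (not_all_ex_not _ _ Hfin) as [N HN].
    destruct Hbad as (HD & Hx & _).
    apply Hf, (bad_seq_of_bounded_tail_mins D f x N HD Hx).
    intros i Hi Hmin; apply HN; now exists i.
Qed.
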